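(* Let $a>0$ and let $f:[0,\infty)\to[0,\infty)$ be defined by $f(x)=7x$ for $0\le x\le a$, $f(x)=8a-x$ for $a\le x\le 8a$, and $f(x)=0$ for $x\ge 8a$. Consider the problem of choosing a (possibly infinite) subset $U\subseteq(0,8a)$ maximizing $\sum_{x\in U}f(x)$ subject to the constraint that for all $x,y\in U$, $x<y$ implies $2x\le y$. Then the supremum (optimal value) of this problem is exactly $24a$ (and it is attained, e.g. by $U=\{4a/2^i : i\in\mathbb{N}\cup\{0\}\}$). *)

From HB Require Import structures.
From mathcomp Require Import all_boot all_order all_algebra.
From mathcomp Require Import all_classical all_reals all_analysis.
Set Implicit Arguments. Unset Strict Implicit. Unset Printing Implicit Defensive.
Import Order.TTheory GRing.Theory Num.Theory.
Local Open Scope classical_set_scope.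
Local Open Scope ring_scope.

(* The piecewise-linear tent function f on [0, oo) (values for x < 0 are
   irrelevant: admissible sets lie in (0, 8a)). *)
Definition tentf (R : realType) (a x : R) : R :=
  if x <= a then 7 * x else if x <= 8 * a then 8 * a - x else 0.

Definition admissible (R : realType) (a : R) (U : set R) : Prop :=
  U `<=` [set x | 0 < x < 8 * a] /\
  (forall x y, U x -> U y -> (x < y) -> (2 * x <= y)).

(* The objective value: sum of f over U (possibly infinite; sum of nonnegative
   terms in extended reals, = sup of finite partial sums). *)
Definition objective (R : realType) (a : R) (U : set R) : \bar R :=
  \esum_(x in U) (tentf a x)%:E.

Set Warnings "-notation-overridden,-notation-incompatible-prefix,-ambiguous-paths".
From HB Require Import structures.
From mathcomp Require Import all_boot all_order all_algebra.
From mathcomp Require Import all_classical all_reals all_analysis.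
From mathcomp Require Import lra.
Set Implicit Arguments. Unset Strict Implicit. Unset Printing Implicit Defensive.
Import Order.TTheory GRing.Theory Num.Theory.
Local Open Scope classical_set_scope.
Local Open Scope ring_scope.

(* List a finite admissible set in decreasing order
   x_1 > x_2 > ...; admissibility says each element is at most half of its
   predecessor.  Using only f x <= 7x and f x <= 8a - x, induction on such a
   "halving chain" whose first element is at most y shows that its f-sum is
   bounded by each of 14y, 8a + 6y, 16a + 2y and 24a (the affine pieces of
   the value function); the last bound is uniform.  The objective, being a
   sum of nonnegative terms, is the supremum of its finite partial sums, so
   it is at most 24a for every admissible set.

   For U0 = {4a / 2^i}, f(4a) = 4a, f(2a) = 6a and f(x) = 7x
   below a, so the partial sums telescope to 24a - 7 * (4a / 2^(n+1)), which
   tend to 24a. *)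

Lemma tentf_ge0 (R : realType) (a x : R) : 0 <= x -> 0 <= tentf a x.
Proof.
move=> x_ge0; rewrite /tentf; case: ifP => [_|_]; first lra.
by case: ifP; lra.
Qed.

(* The only two properties of f used in the upper bound. *)
Lemma tentf_le (R : realType) (a x : R) : 0 <= x -> x <= 8 * a ->
  tentf a x <= 7 * x /\ tentf a x <= 8 * a - x.
Proof.
move=> x_ge0 x_le; rewrite /tentf x_le; case: ifP => [|/negbT]; first lra.
by rewrite -ltNge; lra.
Qed.

Lemma tentf_low (R : realType) (a x : R) : x <= a -> tentf a x = 7 * x.
Proof. by move=> x_le; rewrite /tentf x_le. Qed.

Lemma tentf_mid (R : realType) (a x : R) : a < x -> x <= 8 * a ->
  tentf a x = 8 * a - x.
Proof. by move=> a_lt x_le; rewrite /tentf leNgt a_lt x_le. Qed.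

(* [halves u v]: v is at most half of u; consecutive elements of a decreasing
   enumeration of an admissible set are related this way. *)
Definition halves (R : numDomainType) : rel R := fun u v => 2 * v <= u.

(* The key estimate, by induction on a halving chain s in [0, 8a] whose first
   element is at most y: adding a new top element x <= y to a chain whose
   first element is at most x/2 preserves all four bounds. *)
Lemma halving_chain_sum (R : realType) (a y : R) (s : seq R) :
  0 <= a -> 0 <= y -> sorted (@halves R) s ->
  all (fun x : R => 0 <= x <= 8 * a) s -> head y s <= y ->
  let S := \sum_(x <- s) tentf a x in
  [/\ S <= 14 * y, S <= 8 * a + 6 * y, S <= 16 * a + 2 * y & S <= 24 * a].
Proof.
move=> a_ge0; elim: s y => [|x t IH] y y_ge0 /= chain_s.
  by move=> _ _ /=; rewrite big_nil; split; rewrite ?addr_ge0 ?mulr_ge0.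
move=> /andP[/andP[x_ge0 x_le] range_t] x_le_y; rewrite big_cons.
have [f_le7x f_le8a] := tentf_le x_ge0 x_le.
have head_t : head (x / 2) t <= x / 2.
  case: t chain_s {IH range_t} => [|z t] /=; first lra.
  by rewrite /halves => /andP[]; lra.
have [] := IH (x / 2) _ (path_sorted chain_s) range_t head_t; first lra.
by split; lra.
Qed.

(* Every duplicate-free list of elements of an admissible set has f-sum at
   most 24a: sort it decreasingly and apply the chain estimate with y = 8a. *)
Lemma admissible_list_sum (R : realType) (a : R) (U : set R) (e : seq R) :
  0 <= a -> admissible a U -> uniq e -> (forall x, x \in e -> U x) ->
  \sum_(x <- e) tentf a x <= 24 * a.
Proof.
move=> a_ge0 [U_range U_halves] uniq_e e_U.
set s := sort <=%O e.
have mem_s x : x \in s -> U x by rewrite mem_sort; exact: e_U.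
have increasing_s : sorted <%O s.
  by rewrite lt_sorted_uniq_le sort_uniq uniq_e sort_sorted //; exact: le_total.
have chain_s : sorted (@halves R) (rev s).
  rewrite rev_sorted; apply: (sub_in_sorted (P := mem s)) increasing_s; last first.
    exact/allP.
  by move=> u v /mem_s Uu /mem_s Uv; exact: U_halves.
have perm_s : perm_eq (rev s) e by rewrite perm_rev perm_sort.
rewrite -(perm_big _ perm_s).
have range_s : all (fun x : R => 0 <= x <= 8 * a) (rev s).
  apply/allP => x; rewrite mem_rev => /mem_s /U_range /andP[x_gt0 x_lt].
  by apply/andP; split; lra.
have head_s : head (8 * a) (rev s) <= 8 * a.
  by case: (rev s) range_s => //= x t /andP[/andP[_ ->]].
have [] // := halving_chain_sum (y := 8 * a) a_ge0 _ chain_s range_s head_s.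
lra.
Qed.

(* The objective of an admissible set is the supremum of its finite partial
   sums, hence at most 24a. *)
Lemma objective_le (R : realType) (a : R) (U : set R) : 0 <= a ->
  admissible a U -> (objective a U <= (24 * a)%:E)%E.
Proof.
move=> a_ge0 admU; rewrite /objective /esum.
apply: ge_ereal_sup => _ [X [finX XU] <-].
rewrite fsbig_finite // sumEFin lee_fin (admissible_list_sum a_ge0 admU) //.
  exact: finmap.fset_uniq.
by move=> x; rewrite in_fset_set // => /set_mem /XU.
Qed.

Definition halving_seq (R : realType) (a : R) (i : nat) : R := 4 * a / 2 ^+ i.

Section OptimalSet.
Variables (R : realType) (a : R).
Local Notation p := (halving_seq a).

Lemma halving_seq0 : p 0 = 4 * a.
Proof. by rewrite /halving_seq expr0 divr1. Qed.

Lemma halving_seqS i : p i.+1 = p i / 2.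
Proof. by rewrite /halving_seq exprSr invfM mulrA. Qed.

Lemma halving_seq_gt0 (a_gt0 : 0 < a) i : 0 < p i.
Proof. by rewrite divr_gt0 ?exprn_gt0 ?mulr_gt0. Qed.

Lemma halving_seq_geometric : p = geometric (4 * a) 2^-1.
Proof. by apply/funext => i; rewrite /halving_seq /= exprVn. Qed.

Lemma halving_seq_lt (a_gt0 : 0 < a) i j : (i < j)%N -> p j < p i.
Proof.
move=> ij; rewrite halving_seq_geometric /= ltr_pM2l ?mulr_gt0 //.
by rewrite ltr_iXn2l ?invr_gt0 ?invf_lt1 ?ltr1n.
Qed.

Lemma halving_seq_le (a_gt0 : 0 < a) i j : (i <= j)%N -> p j <= p i.
Proof. by rewrite leq_eqVlt => /predU1P[-> // | /(halving_seq_lt a_gt0)/ltW]. Qed.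

Lemma halving_seq_halves (a_gt0 : 0 < a) i j : (i < j)%N -> 2 * p j <= p i.
Proof. by move=> /(halving_seq_le a_gt0); rewrite halving_seqS; lra. Qed.

Lemma halving_seq_admissible (a_gt0 : 0 < a) : admissible a (range p).
Proof.
split=> [_ [i _ <-] | _ _ [i _ <-] [j _ <-] lt_ij].
  have := halving_seq_le a_gt0 (leq0n i); have := halving_seq_gt0 a_gt0 i.
  by rewrite halving_seq0 /=; lra.
case: (ltnP j i) => [/(halving_seq_halves a_gt0) // | /(halving_seq_le a_gt0)]; lra.
Qed.

Lemma halving_seq_partial_sum (a_gt0 : 0 < a) n :
  \sum_(i < n.+2) tentf a (p i) = 24 * a - 7 * p n.+1.
Proof.
elim: n => [|n IH].
  rewrite !big_ord_recr big_ord0 /= halving_seqS halving_seq0.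
  by rewrite !tentf_mid; lra.
rewrite big_ord_recr IH tentf_low; last first.
  have := halving_seq_le a_gt0 (isT : (2 <= n.+2)%N).
  by rewrite !halving_seqS halving_seq0; lra.
by rewrite /= [p n.+2]halving_seqS; lra.
Qed.

Lemma halving_seq_small (a_gt0 : 0 < a) (eps : R) :
  0 < eps -> exists n, 7 * p n.+1 <= eps.
Proof.
move=> eps_gt0; have half_lt1 : `|2^-1 : R| < 1 by rewrite gtr0_norm ?invf_lt1; lra.
have eps7_gt0 : 0 < eps / 7 by rewrite divr_gt0.
have := cvgr0_norm_le _ (cvg_geometric (4 * a) half_lt1) _ eps7_gt0.
move=> [N _ /(_ N.+1 (leqnSn N))]; rewrite -halving_seq_geometric.
by rewrite gtr0_norm ?(halving_seq_gt0 a_gt0) // => small; exists N; lra.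
Qed.

Lemma halving_seq_objective_ge (a_gt0 : 0 < a) :
  ((24 * a)%:E <= objective a (range p))%E.
Proof.
have tentf_p_ge0 k : (0 <= (tentf a (p k))%:E)%E.
  by rewrite lee_fin tentf_ge0 // ltW ?(halving_seq_gt0 a_gt0).
have p_inj : set_inj setT p.
  move=> i j _ _ pij; apply/eqP; rewrite eqn_leq; apply/andP.
  by split; rewrite leqNgt; apply/negP => /(halving_seq_lt a_gt0); rewrite pij ltxx.
rewrite /objective esum_image // -nneseries_esumT //.
apply/lee_subgt0Pr => eps eps_gt0; have [n small] := halving_seq_small a_gt0 eps_gt0.
apply: le_trans (nneseries_lim_ge n.+2 (fun k _ _ => tentf_p_ge0 k)).
by rewrite sumEFin big_mkord halving_seq_partial_sum // -EFinB lee_fin; lra.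
Qed.

End OptimalSet.

Theorem mainTheorem9 (R : realType) (a : R) (ha : 0 < a) :
  ereal_sup [set objective a U | U in admissible a] = (24 * a)%:E /\
  (let U0 := range (fun i : nat => 4 * a / 2 ^+ i) in
   admissible a U0 /\ objective a U0 = (24 * a)%:E).
Proof.
have a_ge0 : 0 <= a by exact: ltW.
have U0_adm := halving_seq_admissible ha.
have U0_opt : objective a (range (halving_seq a)) = (24 * a)%:E.
  by apply/le_anti; rewrite objective_le // halving_seq_objective_ge.
split; last by split.
apply/le_anti/andP; split.
  by apply: ge_ereal_sup => _ [U admU <-]; exact: objective_le.
by rewrite -U0_opt; apply: ereal_sup_ubound; exists (range (halving_seq a)).
Qed.
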